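(* Let $(X,V)$ and $(\overline{X},\overline{V})$ be solutions of the discrete Motsch–Tadmor model (as in the context) whose initial data satisfy \[ \max\{\|\Delta^x(0)\|_F,\|\Delta^{\overline{x}}(0)\|_F\}<M,\quad \|\Delta^v(0)\|_F<\kappa\int_{\|\Delta^x(0)\|_F}^M\psi(s)\,ds,\quad \|\Delta^{\overline{v}}(0)\|_F<\kappa\int_{\|\Delta^{\overline{x}}(0)\|_F}^M\psi(s)\,ds, \] and let $C\in(0,1)$. Then there are constants $\bar c_0,\bar c_1,\bar c_2\ge0$ depending on $V(0)$, $\overline{V}(0)$ and the model parameters such that, for $h>0$ sufficiently small and any $0\le\epsilon\le1$, setting \[ b_1(\epsilon,h)=(\bar c_0\epsilon+\bar c_1h+\bar c_2h^2)^{1/2},\qquad b_2(h)=C\kappa\psi(M)h, \] one has for all $n\ge0$ \[ \|\Delta^v(n+1)-\Delta^{\overline{v}}(n+1)\|_F\le(1-\epsilon)\|\Delta^v(n)-\Delta^{\overline{v}}(n)\|_F+b_1e^{-b_2n}. \]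
   Context: Discrete MT model: fix $N\ge1$, $d\ge1$, $\kappa>0$, $h>0$, and $a:[0,\infty)\to\mathbb{R}$ with constants $0<c_1\le c_2$, $c_1\le a\le c_2$, $|a(r_1)-a(r_2)|\le L_a|r_1-r_2|$ ($L_a>0$); $0<h<\min\{1,1/\kappa\}$. A solution satisfies $x_i(n+1)=x_i(n)+hv_i(n)$, $v_i(n+1)=v_i(n)+h\kappa\sum_j\phi_{ij}(n)(v_j(n)-v_i(n))$ with $\phi_{ij}(n)=\frac{a(\|x_i(n)-x_j(n)\|)}{\sum_ka(\|x_i(n)-x_k(n)\|)}$, $x_i,v_i\in\mathbb{R}^d$. Notation: $\Delta^x_{ij}=x_i-x_j$, $\Delta^v_{ij}=v_i-v_j$, similarly $\Delta^{\overline{x}},\Delta^{\overline{v}}$ for the second solution; $\|A\|_F=(\sum_{i,j}\|A_{ij}\|^2)^{1/2}$. Constants: $\|\phi\|_{\mathrm{Lip}}=\frac{L_a}{Nc_1}(1+\frac{c_2}{c_1})$, $M=\frac{1}{4N\|\phi\|_{\mathrm{Lip}}}$, $\psi(s)=1-\|\phi\|_{\mathrm{Lip}}Ns$. *)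

From Stdlib Require Import Reals.
From Coquelicot Require Import Coquelicot.
Open Scope R_scope.

Fixpoint sumR (n : nat) (f : nat -> R) : R :=
  match n with
  | O => 0
  | S m => sumR m f + f m
  end.

(* vectors in R^d are represented by their coordinates k < d *)
Definition vec := nat -> R.

Definition enorm (d : nat) (u : vec) : R := sqrt (sumR d (fun k => (u k) ^ 2)).

Definition phiMT (N d : nat) (a : R -> R) (x : nat -> vec) (i j : nat) : R :=
  a (enorm d (fun k => x i k - x j k)) /
  sumR N (fun l => a (enorm d (fun k => x i k - x l k))).

Definition MT_solution (N d : nat) (kappa h : R) (a : R -> R)
  (x v : nat -> nat -> vec) : Prop :=
  forall (n i k : nat), (i < N)%nat -> (k < d)%nat ->
    x (S n) i k = x n i k + h * v n i k /\
    v (S n) i k = v n i k +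
      h * kappa * sumR N (fun j => phiMT N d a (x n) i j * (v n j k - v n i k)).

Definition DeltaM (x : nat -> vec) : nat -> nat -> vec :=
  fun i j k => x i k - x j k.

Definition frob (N d : nat) (A : nat -> nat -> vec) : R :=
  sqrt (sumR N (fun i => sumR N (fun j => (enorm d (A i j)) ^ 2))).

Definition mdiff (A B : nat -> nat -> vec) : nat -> nat -> vec :=
  fun i j k => A i j k - B i j k.

Definition phiLip (N : nat) (La c1 c2 : R) : R :=
  La / (INR N * c1) * (1 + c2 / c1).
Definition Mconst (N : nat) (La c1 c2 : R) : R :=
  1 / (4 * INR N * phiLip N La c1 c2).
Definition psi (N : nat) (La c1 c2 : R) (s : R) : R :=
  1 - phiLip N La c1 c2 * INR N * s.

(* Write X and V for the Frobenius norms of the position and velocity difference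
   matrices, P = N ||phi||_Lip, and Phi(s) = s - P s^2 / 2 for the primitive of psi.
   The weights are ||phi||_Lip-Lipschitz in the positions, so one step of the scheme
   gives X(n+1) <= X(n) + h V(n) and V(n+1) <= (1 - h kappa psi(X(n))) V(n).  As long
   as psi(X) >= 0 the energy V + kappa Phi(X) therefore cannot increase, and by
   concavity of Phi the initial condition V(0) + kappa Phi(X(0)) < kappa Phi(M) keeps X
   below M forever.  Then psi(X(n)) >= psi(M), so V decays like exp(-kappa psi(M) h n).
   Finally the difference D of the two velocity matrices satisfies D(n) <= V(n) + Vb(n)
   and moves by at most 2 h kappa (V(n) + Vb(n)) per step, whence
   D(n+1) <= (1 - eps) D(n) + (eps + 2 h kappa) (V(0) + Vb(0)) exp(-kappa psi(M) h n). *)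

From Stdlib Require Import Reals Lra Lia Psatz.
From Coquelicot Require Import Coquelicot.
Open Scope R_scope.

(** * Finite sums, Euclidean and Frobenius norms *)

Lemma INR_ge_1 n : (1 <= n)%nat -> 1 <= INR n.
Proof. intros Hn. exact (le_INR 1 n Hn). Qed.

Lemma sumR_ext n f g : (forall i, (i < n)%nat -> f i = g i) -> sumR n f = sumR n g.
Proof.
  induction n as [|n IH]; intros Hfg; simpl; [reflexivity|].
  rewrite IH by (intros; apply Hfg; lia). rewrite Hfg by lia. reflexivity.
Qed.

Lemma sumR_le n f g : (forall i, (i < n)%nat -> f i <= g i) -> sumR n f <= sumR n g.
Proof.
  induction n as [|n IH]; intros Hfg; simpl; [lra|].
  assert (sumR n f <= sumR n g) by (apply IH; intros; apply Hfg; lia).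
  assert (f n <= g n) by (apply Hfg; lia).
  lra.
Qed.

Lemma sumR_const n c : sumR n (fun _ => c) = INR n * c.
Proof. induction n as [|n IH]; simpl sumR; [simpl; lra|]. rewrite IH, S_INR; lra. Qed.

Lemma sumR_nonneg n f : (forall i, (i < n)%nat -> 0 <= f i) -> 0 <= sumR n f.
Proof.
  intros Hf. apply Rle_trans with (sumR n (fun _ => 0)).
  - rewrite sumR_const; lra.
  - now apply sumR_le.
Qed.

Lemma sumR_add n f g : sumR n (fun i => f i + g i) = sumR n f + sumR n g.
Proof. induction n as [|n IH]; simpl; [lra|]. rewrite IH; lra. Qed.

Lemma sumR_sub n f g : sumR n (fun i => f i - g i) = sumR n f - sumR n g.
Proof. induction n as [|n IH]; simpl; [lra|]. rewrite IH; lra. Qed.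

Lemma sumR_scal n c f : sumR n (fun i => c * f i) = c * sumR n f.
Proof. induction n as [|n IH]; simpl; [lra|]. rewrite IH; lra. Qed.

Lemma sumR_abs_le n f : Rabs (sumR n f) <= sumR n (fun i => Rabs (f i)).
Proof.
  induction n as [|n IH]; simpl; [rewrite Rabs_R0; lra|].
  pose proof (Rabs_triang (sumR n f) (f n)); lra.
Qed.

Lemma sumR_term_le n f i :
  (forall j, (j < n)%nat -> 0 <= f j) -> (i < n)%nat -> f i <= sumR n f.
Proof.
  induction n as [|n IH]; intros Hf Hi; [lia|]. simpl.
  assert (0 <= f n) by (apply Hf; lia).
  destruct (Nat.eq_dec i n) as [->|Hne].
  - assert (0 <= sumR n f) by (apply sumR_nonneg; intros; apply Hf; lia). lra.
  - assert (f i <= sumR n f) by (apply IH; [intros; apply Hf|]; lia). lra.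
Qed.

Lemma enorm_nonneg n f : 0 <= enorm n f.
Proof. apply sqrt_pos. Qed.

Lemma enorm_sq n f : enorm n f ^ 2 = sumR n (fun i => f i ^ 2).
Proof. apply pow2_sqrt, sumR_nonneg; intros; apply pow2_ge_0. Qed.

Lemma enorm_ext n f g : (forall i, (i < n)%nat -> f i = g i) -> enorm n f = enorm n g.
Proof. intros Hfg. unfold enorm. f_equal. apply sumR_ext. intros i Hi. now rewrite Hfg. Qed.

Lemma enorm_zero n : enorm n (fun _ => 0) = 0.
Proof. unfold enorm. rewrite sumR_const, pow_i, Rmult_0_r by lia. apply sqrt_0. Qed.

Lemma enorm_le_compat n f g :
  (forall i, (i < n)%nat -> Rabs (f i) <= g i) -> enorm n f <= enorm n g.
Proof.
  intros Hfg. apply sqrt_le_1_alt, sumR_le. intros i Hi.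
  pose proof (Hfg i Hi). pose proof (Rabs_pos (f i)).
  rewrite <- (pow2_abs (f i)). nra.
Qed.

Lemma enorm_abs n f : enorm n (fun i => Rabs (f i)) = enorm n f.
Proof. unfold enorm. f_equal. apply sumR_ext. intros. apply pow2_abs. Qed.

Lemma enorm_scal n c f : enorm n (fun i => c * f i) = Rabs c * enorm n f.
Proof.
  unfold enorm. rewrite <- (sqrt_pow2 (Rabs c)) by apply Rabs_pos.
  rewrite <- sqrt_mult by (apply pow2_ge_0 || (apply sumR_nonneg; intros; apply pow2_ge_0)).
  f_equal. rewrite pow2_abs, <- sumR_scal. apply sumR_ext. intros. ring.
Qed.

Lemma Rabs_le_enorm n f i : (i < n)%nat -> Rabs (f i) <= enorm n f.
Proof.
  intros Hi. rewrite <- (sqrt_pow2 (Rabs (f i))) by apply Rabs_pos.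
  apply sqrt_le_1_alt. rewrite pow2_abs.
  apply (sumR_term_le n (fun j => f j ^ 2)); auto. intros; apply pow2_ge_0.
Qed.

(* Cauchy-Schwarz in the plane, for (sqrt P, a) and (sqrt Q, b). *)
Lemma sqrt_mul_add_le P Q a b : 0 <= P -> 0 <= Q ->
  sqrt P * sqrt Q + a * b <= sqrt (P + a ^ 2) * sqrt (Q + b ^ 2).
Proof.
  intros HP HQ.
  pose proof (sqrt_pos P) as Hp. pose proof (sqrt_pos Q) as Hq.
  pose proof (pow2_sqrt P HP) as EP. pose proof (pow2_sqrt Q HQ) as EQ.
  set (p := sqrt P) in *. set (q := sqrt Q) in *.
  rewrite <- sqrt_mult by nra.
  destruct (Rle_dec (p * q + a * b) 0).
  { pose proof (sqrt_pos ((P + a ^ 2) * (Q + b ^ 2))). lra. }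
  rewrite <- (sqrt_pow2 (p * q + a * b)) by lra.
  apply sqrt_le_1_alt. rewrite <- EP, <- EQ.
  pose proof (pow2_ge_0 (p * b - q * a)). nra.
Qed.

Lemma sumR_mul_le_enorm n f g : sumR n (fun i => f i * g i) <= enorm n f * enorm n g.
Proof.
  induction n as [|n IH]; unfold enorm in *; cbn [sumR].
  - rewrite sqrt_0. lra.
  - eapply Rle_trans; [|apply sqrt_mul_add_le; apply sumR_nonneg; intros; apply pow2_ge_0].
    lra.
Qed.

Lemma sumR_le_sqrt_INR_mul_enorm n f : sumR n f <= sqrt (INR n) * enorm n f.
Proof.
  replace (sqrt (INR n)) with (enorm n (fun _ => 1))
    by (unfold enorm; rewrite sumR_const; f_equal; ring).
  rewrite (sumR_ext n f (fun i => 1 * f i)) by (intros; ring).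
  apply sumR_mul_le_enorm.
Qed.

Lemma enorm_triangle n f g : enorm n (fun i => f i + g i) <= enorm n f + enorm n g.
Proof.
  pose proof (enorm_nonneg n f). pose proof (enorm_nonneg n g).
  rewrite <- (sqrt_pow2 (enorm n f + enorm n g)) by lra.
  apply sqrt_le_1_alt.
  replace (sumR n (fun i => (f i + g i) ^ 2))
    with (sumR n (fun i => f i ^ 2) + 2 * sumR n (fun i => f i * g i) + sumR n (fun i => g i ^ 2))
    by (rewrite <- sumR_scal, <- !sumR_add; apply sumR_ext; intros; ring).
  rewrite <- !enorm_sq. pose proof (sumR_mul_le_enorm n f g). nra.
Qed.

Lemma enorm_le_lincomb n w f g al be : 0 <= al -> 0 <= be ->
  (forall i, (i < n)%nat -> Rabs (w i) <= al * Rabs (f i) + be * Rabs (g i)) ->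
  enorm n w <= al * enorm n f + be * enorm n g.
Proof.
  intros Hal Hbe Hw.
  rewrite <- (Rabs_pos_eq al Hal), <- (Rabs_pos_eq be Hbe), <- !enorm_scal,
    <- (enorm_abs n (fun i => al * f i)), <- (enorm_abs n (fun i => be * g i)).
  eapply Rle_trans; [|apply enorm_triangle].
  apply enorm_le_compat. intros i Hi.
  rewrite !Rabs_mult, (Rabs_pos_eq al Hal), (Rabs_pos_eq be Hbe).
  auto.
Qed.

Lemma enorm_lincomb n w f g al be :
  (forall i, (i < n)%nat -> w i = al * f i + be * g i) ->
  enorm n w <= Rabs al * enorm n f + Rabs be * enorm n g.
Proof.
  intros Hw. apply enorm_le_lincomb; try apply Rabs_pos.
  intros i Hi. rewrite Hw, <- !Rabs_mult by exact Hi. apply Rabs_triang.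
Qed.

Lemma enorm_reverse_triangle n f g : Rabs (enorm n f - enorm n g) <= enorm n (fun i => f i - g i).
Proof.
  assert (enorm n f <= Rabs 1 * enorm n g + Rabs 1 * enorm n (fun i => f i - g i))
    by (apply enorm_lincomb; intros; ring).
  assert (enorm n g <= Rabs 1 * enorm n f + Rabs (-1) * enorm n (fun i => f i - g i))
    by (apply enorm_lincomb; intros; ring).
  rewrite (Rabs_left (-1)), Rabs_R1 in * by lra. apply Rabs_le. lra.
Qed.

Lemma enorm_sumR_le n m (c : nat -> R) (w : nat -> vec) :
  enorm n (fun k => sumR m (fun l => c l * w l k)) <= sumR m (fun l => Rabs (c l) * enorm n (w l)).
Proof.
  induction m as [|m IH]; cbn [sumR].
  - rewrite enorm_zero. lra.
  - eapply Rle_trans.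
    { apply (enorm_lincomb n _ (fun k => sumR m (fun l => c l * w l k)) (w m) 1 (c m)).
      intros; ring. }
    rewrite Rabs_R1. lra.
Qed.

Lemma frob_enorm N d A : frob N d A = enorm N (fun i => enorm N (fun j => enorm d (A i j))).
Proof.
  unfold frob. apply (f_equal sqrt), sumR_ext. intros. now rewrite enorm_sq.
Qed.

Lemma frob_nonneg N d A : 0 <= frob N d A.
Proof. apply sqrt_pos. Qed.

Lemma frob_ext N d A B :
  (forall i j k, (i < N)%nat -> (j < N)%nat -> (k < d)%nat -> A i j k = B i j k) ->
  frob N d A = frob N d B.
Proof.
  intros HAB. rewrite !frob_enorm.
  apply enorm_ext; intros i Hi. apply enorm_ext; intros j Hj. apply enorm_ext; intros k Hk.
  auto.
Qed.

Lemma frob_DeltaM_ext N d u w :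
  (forall i k, (i < N)%nat -> (k < d)%nat -> u i k = w i k) ->
  frob N d (DeltaM u) = frob N d (DeltaM w).
Proof.
  intros Huw. apply frob_ext. intros i j k Hi Hj Hk. unfold DeltaM. now rewrite !Huw.
Qed.

Lemma enorm_row_le_frob N d A i :
  (i < N)%nat -> enorm N (fun j => enorm d (A i j)) <= frob N d A.
Proof.
  intros Hi. rewrite frob_enorm.
  rewrite <- (Rabs_pos_eq (enorm N _)) by apply enorm_nonneg.
  now apply (Rabs_le_enorm N (fun i => enorm N (fun j => enorm d (A i j)))).
Qed.

Lemma frob_lincomb N d A B C al be :
  (forall i j k, (i < N)%nat -> (j < N)%nat -> (k < d)%nat ->
     C i j k = al * A i j k + be * B i j k) ->
  frob N d C <= Rabs al * frob N d A + Rabs be * frob N d B.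
Proof.
  intros HC. rewrite !frob_enorm.
  apply enorm_le_lincomb; try apply Rabs_pos. intros i Hi.
  rewrite 3!(Rabs_pos_eq (enorm _ _)) by apply enorm_nonneg.
  apply enorm_le_lincomb; try apply Rabs_pos. intros j Hj.
  rewrite 3!(Rabs_pos_eq (enorm _ _)) by apply enorm_nonneg.
  apply enorm_lincomb. auto.
Qed.

Lemma frob_le_scale N d A B c : 0 <= c ->
  (forall i j, (i < N)%nat -> (j < N)%nat -> enorm d (A i j) <= c * enorm d (B i j)) ->
  frob N d A <= c * frob N d B.
Proof.
  intros Hc HAB. rewrite !frob_enorm, <- (Rabs_pos_eq c Hc), <- (enorm_scal N c).
  apply enorm_le_compat. intros i Hi.
  rewrite Rabs_pos_eq by apply enorm_nonneg.
  rewrite <- (Rabs_pos_eq c Hc) at 1. rewrite <- (enorm_scal N c).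
  apply enorm_le_compat. intros j Hj.
  rewrite (Rabs_pos_eq (enorm d (A i j))) by apply enorm_nonneg. auto.
Qed.

Lemma frob_mdiff_le N d A B : frob N d (mdiff A B) <= frob N d A + frob N d B.
Proof.
  eapply Rle_trans.
  { apply (frob_lincomb N d A B _ 1 (-1)). intros. unfold mdiff. ring. }
  rewrite Rabs_R1, (Rabs_left (-1)) by lra. lra.
Qed.

Lemma frob_mdiff_succ_le N d A A' B B' :
  frob N d (mdiff A' B') <= frob N d (mdiff A B) + frob N d (mdiff A' A) + frob N d (mdiff B' B).
Proof.
  eapply Rle_trans.
  { apply (frob_lincomb N d (mdiff A B) (fun i j k => mdiff A' A i j k - mdiff B' B i j k) _ 1 1).
    intros. unfold mdiff. ring. }
  rewrite Rabs_R1, !Rmult_1_l, Rplus_assoc. apply Rplus_le_compat_l.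
  eapply Rle_trans.
  { apply (frob_lincomb N d (mdiff A' A) (mdiff B' B) _ 1 (-1)). intros. ring. }
  rewrite Rabs_R1, (Rabs_left (-1)) by lra. lra.
Qed.

(** * The function psi *)

Definition psi_antideriv (N : nat) (La c1 c2 : R) (s : R) : R :=
  s - phiLip N La c1 c2 * INR N * s ^ 2 / 2.

Lemma RInt_psi N La c1 c2 lo hi :
  RInt (psi N La c1 c2) lo hi = psi_antideriv N La c1 c2 hi - psi_antideriv N La c1 c2 lo.
Proof.
  apply is_RInt_unique, (is_RInt_derive (psi_antideriv N La c1 c2)).
  - intros s _. unfold psi_antideriv, psi. auto_derive; [exact I|]. field.
  - intros s _. apply (ex_derive_continuous (psi N La c1 c2)). unfold psi. auto_derive. exact I.
Qed.

Lemma phiLip_INR_nonneg N La c1 c2 : 0 <= La -> 0 < c1 -> 0 <= c2 -> 0 <= phiLip N La c1 c2 * INR N.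
Proof.
  intros HLa Hc1 Hc2. pose proof (pos_INR N). unfold phiLip, Rdiv.
  assert (0 <= / (INR N * c1)).
  { destruct (Req_dec (INR N) 0) as [->|HN].
    - rewrite Rmult_0_l, Rinv_0. lra.
    - left. apply Rinv_0_lt_compat. nra. }
  assert (0 <= c2 * / c1) by (apply Rmult_le_pos; [lra|left; now apply Rinv_0_lt_compat]).
  repeat apply Rmult_le_pos; lra.
Qed.

Lemma psi_Mconst N La c1 c2 : (1 <= N)%nat -> 0 < La -> 0 < c1 -> 0 <= c2 ->
  psi N La c1 c2 (Mconst N La c1 c2) = 3 / 4.
Proof.
  intros HN HLa Hc1 Hc2. pose proof (INR_ge_1 N HN).
  unfold psi, Mconst, phiLip. field.
  repeat split; lra.
Qed.

Section PsiShape.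

Variables (N : nat) (La c1 c2 : R).
Hypothesis HP : 0 <= phiLip N La c1 c2 * INR N.

Lemma psi_antitone s t : s <= t -> psi N La c1 c2 t <= psi N La c1 c2 s.
Proof. intros. unfold psi. nra. Qed.

Lemma psi_le_1 s : 0 <= s -> psi N La c1 c2 s <= 1.
Proof. intros. unfold psi. nra. Qed.

Lemma psi_antideriv_concave s t :
  psi_antideriv N La c1 c2 t <= psi_antideriv N La c1 c2 s + psi N La c1 c2 s * (t - s).
Proof. unfold psi_antideriv, psi. pose proof (pow2_ge_0 (t - s)). nra. Qed.

End PsiShape.

(** * Communication weights *)

Lemma Rabs_div_sub_div_le p q s t s0 delta sigma c :
  0 < s0 -> s0 <= s -> s0 <= t -> 0 <= q <= c ->
  Rabs (p - q) <= delta -> Rabs (t - s) <= sigma ->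
  Rabs (p / s - q / t) <= delta / s0 + c * sigma / s0 ^ 2.
Proof.
  intros Hs0 Hs Ht Hq Hpq Hts.
  assert (Hu : 0 < / s <= / s0) by (split; [apply Rinv_0_lt_compat | apply Rinv_le_contravar]; lra).
  assert (Hw : 0 < / t <= / s0) by (split; [apply Rinv_0_lt_compat | apply Rinv_le_contravar]; lra).
  replace (p / s - q / t) with ((p - q) * / s + q * ((t - s) * (/ s * / t))) by (field; lra).
  replace (delta / s0 + c * sigma / s0 ^ 2) with (delta * / s0 + c * (sigma * (/ s0 * / s0)))
    by (field; lra).
  eapply Rle_trans; [apply Rabs_triang|].
  rewrite !Rabs_mult, (Rabs_pos_eq (/ s)), (Rabs_pos_eq (/ t)), (Rabs_pos_eq q) by lra.
  pose proof (Rabs_pos (p - q)). pose proof (Rabs_pos (t - s)).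
  assert (/ s * / t <= / s0 * / s0) by (apply Rmult_le_compat; lra).
  apply Rplus_le_compat; apply Rmult_le_compat; try lra.
  - apply Rmult_le_pos; nra.
  - apply Rmult_le_compat; nra.
Qed.

Definition coupling_error (N d : nat) (a : R -> R) (x v : nat -> vec) : nat -> nat -> vec :=
  fun i j k => sumR N (fun l => (phiMT N d a x j l - phiMT N d a x i l) * DeltaM v i l k).

Section Weights.

Variables (N d : nat) (a : R -> R) (c1 c2 La : R).
Hypothesis HN : (1 <= N)%nat.
Hypothesis Hc1 : 0 < c1.
Hypothesis Ha_bounds : forall r, 0 <= r -> c1 <= a r <= c2.
Hypothesis Ha_lip :
  forall r1 r2, 0 <= r1 -> 0 <= r2 -> Rabs (a r1 - a r2) <= La * Rabs (r1 - r2).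

Lemma La_nonneg : 0 <= La.
Proof.
  pose proof (Ha_lip 0 1 (Rle_refl 0) Rle_0_1) as H.
  rewrite Rminus_0_l, Rabs_Ropp, Rabs_R1 in H. pose proof (Rabs_pos (a 0 - a 1)). lra.
Qed.

Lemma c2_nonneg : 0 <= c2.
Proof. pose proof (Ha_bounds 0 (Rle_refl 0)). lra. Qed.

Lemma weight_normalizer_ge (x : nat -> vec) i :
  INR N * c1 <= sumR N (fun l => a (enorm d (fun k => x i k - x l k))).
Proof. rewrite <- sumR_const. apply sumR_le. intros l _. apply Ha_bounds, enorm_nonneg. Qed.

Lemma phiMT_sum x i : sumR N (fun l => phiMT N d a x i l) = 1.
Proof.
  unfold phiMT.
  rewrite (sumR_ext _ _ (fun l => / sumR N (fun m => a (enorm d (fun k => x i k - x m k)))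
                                  * a (enorm d (fun k => x i k - x l k))))
    by (intros; unfold Rdiv; ring).
  rewrite sumR_scal. field.
  pose proof (weight_normalizer_ge x i). pose proof (INR_ge_1 N HN). nra.
Qed.

Lemma phiMT_lipschitz x i j l :
  Rabs (phiMT N d a x i l - phiMT N d a x j l)
    <= phiLip N La c1 c2 * enorm d (fun k => x i k - x j k).
Proof.
  unfold phiMT. set (r := enorm d (fun k => x i k - x j k)).
  pose proof (INR_ge_1 N HN). pose proof La_nonneg.
  pose proof (enorm_nonneg d (fun k => x i k - x j k)).
  assert (Hpair : forall m, Rabs (a (enorm d (fun k => x i k - x m k))
                                  - a (enorm d (fun k => x j k - x m k))) <= La * r).
  { intros m. eapply Rle_trans; [apply Ha_lip; apply enorm_nonneg|].
    apply Rmult_le_compat_l; [lra|].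
    eapply Rle_trans; [apply enorm_reverse_triangle|].
    right. apply enorm_ext. intros. ring. }
  replace (phiLip N La c1 c2 * r)
    with (La * r / (INR N * c1) + c2 * (INR N * (La * r)) / (INR N * c1) ^ 2)
    by (unfold phiLip; field; lra).
  apply Rabs_div_sub_div_le.
  - nra.
  - apply weight_normalizer_ge.
  - apply weight_normalizer_ge.
  - pose proof (Ha_bounds _ (enorm_nonneg d (fun k => x j k - x l k))). lra.
  - apply Hpair.
  - rewrite <- sumR_sub, <- sumR_const.
    eapply Rle_trans; [apply sumR_abs_le|].
    apply sumR_le. intros m _. rewrite <- Rabs_Ropp, Ropp_minus_distr. apply Hpair.
Qed.

Lemma coupling_error_frob_le x v :
  frob N d (coupling_error N d a x v)
    <= phiLip N La c1 c2 * INR N * frob N d (DeltaM x) * frob N d (DeltaM v).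
Proof.
  pose proof (INR_ge_1 N HN). pose proof (phiLip_INR_nonneg N La c1 c2 La_nonneg Hc1 c2_nonneg).
  set (L := phiLip N La c1 c2) in *. set (Vf := frob N d (DeltaM v)).
  assert (HL : 0 <= L) by nra.
  assert (HV : 0 <= Vf) by apply frob_nonneg.
  assert (Hsqrt : sqrt (INR N) <= INR N).
  { pose proof (sqrt_pos (INR N)). pose proof (pow2_sqrt (INR N) ltac:(lra)). nra. }
  apply Rle_trans with (L * sqrt (INR N) * Vf * frob N d (DeltaM x)).
  2:{ pose proof (frob_nonneg N d (DeltaM x)). set (Xf := frob N d (DeltaM x)) in *.
      replace (L * sqrt (INR N) * Vf * Xf) with (L * Vf * Xf * sqrt (INR N)) by ring.
      replace (L * INR N * Xf * Vf) with (L * Vf * Xf * INR N) by ring.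
      apply Rmult_le_compat_l; [|assumption].
      apply Rmult_le_pos; [apply Rmult_le_pos|]; assumption. }
  apply frob_le_scale.
  { apply Rmult_le_pos; [apply Rmult_le_pos|]; [assumption|apply sqrt_pos|assumption]. }
  intros i j Hi Hj. unfold coupling_error.
  eapply Rle_trans; [apply enorm_sumR_le|].
  apply Rle_trans with (sumR N (fun l => L * enorm d (DeltaM x i j) * enorm d (DeltaM v i l))).
  { apply sumR_le. intros l _. apply Rmult_le_compat_r; [apply enorm_nonneg|].
    rewrite Rabs_minus_sym. apply phiMT_lipschitz. }
  rewrite sumR_scal.
  replace (L * sqrt (INR N) * Vf * enorm d (DeltaM x i j))
    with (L * enorm d (DeltaM x i j) * (sqrt (INR N) * Vf)) by ring.
  apply Rmult_le_compat_l; [pose proof (enorm_nonneg d (DeltaM x i j)); nra|].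
  eapply Rle_trans; [apply sumR_le_sqrt_INR_mul_enorm|].
  apply Rmult_le_compat_l; [apply sqrt_pos|].
  now apply enorm_row_le_frob.
Qed.

End Weights.

(** * Evolution of the spreads *)

Section Dynamics.

Variables (N d : nat) (kappa h : R) (a : R -> R) (c1 c2 La : R) (x v : nat -> nat -> vec).
Hypothesis HN : (1 <= N)%nat.
Hypothesis Hc1 : 0 < c1.
Hypothesis Ha_bounds : forall r, 0 <= r -> c1 <= a r <= c2.
Hypothesis Ha_lip :
  forall r1 r2, 0 <= r1 -> 0 <= r2 -> Rabs (a r1 - a r2) <= La * Rabs (r1 - r2).
Hypothesis Hsol : MT_solution N d kappa h a x v.
Hypothesis Hh : 0 <= h.
Hypothesis Hk : 0 <= kappa.
Hypothesis Hhk : h * kappa <= 1.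

Let HP : 0 <= phiLip N La c1 c2 * INR N :=
  phiLip_INR_nonneg N La c1 c2 (La_nonneg a La Ha_lip) Hc1 (c2_nonneg a c1 c2 Hc1 Ha_bounds).

Local Notation X n := (frob N d (DeltaM (x n))).
Local Notation V n := (frob N d (DeltaM (v n))).
Local Notation Psi := (psi N La c1 c2).
Local Notation F := (psi_antideriv N La c1 c2).

Lemma DeltaM_x_succ n i j k : (i < N)%nat -> (j < N)%nat -> (k < d)%nat ->
  DeltaM (x (S n)) i j k = DeltaM (x n) i j k + h * DeltaM (v n) i j k.
Proof.
  intros Hi Hj Hk'. unfold DeltaM.
  rewrite (proj1 (Hsol n i k Hi Hk')), (proj1 (Hsol n j k Hj Hk')). ring.
Qed.

Lemma DeltaM_v_succ n i j k : (i < N)%nat -> (j < N)%nat -> (k < d)%nat ->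
  DeltaM (v (S n)) i j k
    = (1 - h * kappa) * DeltaM (v n) i j k + h * kappa * coupling_error N d a (x n) (v n) i j k.
Proof.
  intros Hi Hj Hk'. unfold DeltaM at 1.
  rewrite (proj2 (Hsol n i k Hi Hk')), (proj2 (Hsol n j k Hj Hk')).
  set (p := phiMT N d a (x n)).
  (* Each row of weights sums to one, so the difference of the two weighted averages
     is [coupling_error - DeltaM]. *)
  assert (Hrows : coupling_error N d a (x n) (v n) i j k
    = DeltaM (v n) i j k + sumR N (fun l => p i l * (v n l k - v n i k))
      - sumR N (fun l => p j l * (v n l k - v n j k))).
  { unfold coupling_error. fold p.
    rewrite (sumR_ext _ _ (fun l => DeltaM (v n) i j k * p j l
      + (p i l * (v n l k - v n i k) - p j l * (v n l k - v n j k))))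
      by (intros; unfold DeltaM; ring).
    rewrite sumR_add, sumR_sub, sumR_scal. unfold p. rewrite (phiMT_sum N d a c1 c2); auto. ring. }
  rewrite Hrows. unfold DeltaM. ring.
Qed.

Lemma spread_x_succ_le n : X (S n) <= X n + h * V n.
Proof.
  eapply Rle_trans.
  { apply (frob_lincomb N d (DeltaM (x n)) (DeltaM (v n)) _ 1 h).
    intros. rewrite DeltaM_x_succ by assumption. ring. }
  rewrite Rabs_R1, (Rabs_pos_eq h Hh). lra.
Qed.

Lemma spread_v_succ_le n : V (S n) <= (1 - h * kappa * Psi (X n)) * V n.
Proof.
  pose proof (coupling_error_frob_le N d a c1 c2 La HN Hc1 Ha_bounds Ha_lip (x n) (v n)).
  assert (Hhk0 : 0 <= h * kappa) by nra.
  eapply Rle_trans.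
  { apply (frob_lincomb N d (DeltaM (v n)) (coupling_error N d a (x n) (v n)) _
      (1 - h * kappa) (h * kappa)). intros. now apply DeltaM_v_succ. }
  rewrite !Rabs_pos_eq by lra. unfold psi.
  pose proof (Rmult_le_compat_l _ _ _ Hhk0 H). lra.
Qed.

Lemma spread_v_increment_le n :
  0 <= Psi (X n) -> frob N d (mdiff (DeltaM (v (S n))) (DeltaM (v n))) <= 2 * h * kappa * V n.
Proof.
  intros Hpsi.
  pose proof (coupling_error_frob_le N d a c1 c2 La HN Hc1 Ha_bounds Ha_lip (x n) (v n)).
  assert (Hhk0 : 0 <= h * kappa) by nra.
  eapply Rle_trans.
  { apply (frob_lincomb N d (DeltaM (v n)) (coupling_error N d a (x n) (v n)) _
      (- (h * kappa)) (h * kappa)).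
    intros. unfold mdiff. rewrite DeltaM_v_succ by assumption. ring. }
  rewrite Rabs_Ropp, Rabs_pos_eq by exact Hhk0. unfold psi in Hpsi.
  pose proof (frob_nonneg N d (DeltaM (v n))).
  assert (phiLip N La c1 c2 * INR N * X n * V n <= V n) by nra.
  assert (h * kappa * frob N d (coupling_error N d a (x n) (v n)) <= h * kappa * V n)
    by (apply Rmult_le_compat_l; lra).
  lra.
Qed.

Lemma energy_succ_le n :
  0 <= Psi (X n) -> V (S n) + kappa * F (X (S n)) <= V n + kappa * F (X n).
Proof.
  intros Hpsi.
  pose proof (psi_antideriv_concave N La c1 c2 HP (X n) (X (S n))) as Hconc.
  pose proof (spread_x_succ_le n). pose proof (spread_v_succ_le n).
  assert (kappa * Psi (X n) * (X (S n) - X n) <= kappa * Psi (X n) * (h * V n))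
    by (apply Rmult_le_compat_l; [apply Rmult_le_pos|]; lra).
  assert (kappa * F (X (S n)) <= kappa * (F (X n) + Psi (X n) * (X (S n) - X n)))
    by (apply Rmult_le_compat_l; assumption).
  nra.
Qed.

Section BelowM.

Variable M : R.
Hypothesis HpsiM : 0 <= Psi M.
Hypothesis HX0 : X 0 < M.
Hypothesis HE0 : V 0 + kappa * F (X 0) < kappa * F M.

Lemma spread_invariant n : X n < M /\ V n + kappa * F (X n) < kappa * F M.
Proof.
  induction n as [|n [HXn HEn]]; [split; assumption|].
  pose proof (frob_nonneg N d (DeltaM (x n))) as HX0n.
  assert (Hpsi : 0 <= Psi (X n))
    by (eapply Rle_trans; [exact HpsiM | apply psi_antitone; [exact HP | lra]]).
  assert (HVn : V n < kappa * (M - X n)).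
  { pose proof (psi_antideriv_concave N La c1 c2 HP (X n) M).
    pose proof (psi_le_1 N La c1 c2 HP (X n) HX0n).
    assert (kappa * F M <= kappa * (F (X n) + Psi (X n) * (M - X n)))
      by (apply Rmult_le_compat_l; assumption).
    assert (kappa * (Psi (X n) * (M - X n)) <= kappa * (M - X n))
      by (apply Rmult_le_compat_l; nra).
    lra. }
  split.
  - pose proof (spread_x_succ_le n).
    destruct Hh as [Hhpos|<-]; [|lra].
    assert (h * V n < h * (kappa * (M - X n))) by (apply Rmult_lt_compat_l; assumption).
    nra.
  - pose proof (energy_succ_le n Hpsi). lra.
Qed.

Lemma spread_v_decay n : V n <= exp (- (kappa * Psi M * h) * INR n) * V 0.
Proof.
  induction n as [|n IH].
  - simpl INR. rewrite Rmult_0_r, exp_0. lra.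
  - destruct (spread_invariant n) as [HXn _].
    pose proof (frob_nonneg N d (DeltaM (v n))).
    assert (Hpsi : Psi M <= Psi (X n)) by (apply psi_antitone; [exact HP | lra]).
    assert (Hstep : V (S n) <= exp (- (kappa * Psi M * h)) * V n).
    { eapply Rle_trans; [apply spread_v_succ_le|].
      apply Rmult_le_compat_r; [assumption|].
      pose proof (exp_ineq1_le (- (kappa * Psi M * h))).
      assert (h * kappa * Psi M <= h * kappa * Psi (X n))
        by (apply Rmult_le_compat_l; [nra|assumption]).
      lra. }
    rewrite S_INR, Rmult_plus_distr_l, Rmult_1_r, exp_plus.
    eapply Rle_trans; [exact Hstep|].
    set (q := exp (- (kappa * Psi M * h))).
    apply Rle_trans with (q * (exp (- (kappa * Psi M * h) * INR n) * V 0)); [|right; ring].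
    apply Rmult_le_compat_l; [left; apply exp_pos | exact IH].
Qed.

End BelowM.

End Dynamics.

Lemma forced_contraction_le D D' S T E eps hk :
  0 <= eps <= 1 -> 0 <= hk -> 0 <= T -> 0 <= E ->
  D <= S -> S <= T * E -> D' <= D + 2 * hk * S ->
  D' <= (1 - eps) * D + sqrt (2 * T ^ 2 * eps + 8 * hk ^ 2 * T ^ 2) * E.
Proof.
  intros Heps Hhk HT HE HDS HST HD'.
  (* [(eps + 2 hk)^2 <= 2 eps^2 + 8 hk^2] and [eps^2 <= eps] *)
  assert (Hsqrt : (eps + 2 * hk) * T <= sqrt (2 * T ^ 2 * eps + 8 * hk ^ 2 * T ^ 2)).
  { rewrite <- (sqrt_pow2 ((eps + 2 * hk) * T)) by nra.
    apply sqrt_le_1_alt.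
    assert (0 <= T ^ 2 * (eps - 2 * hk) ^ 2) by (apply Rmult_le_pos; apply pow2_ge_0).
    assert (0 <= T ^ 2 * (eps * (1 - eps))) by (apply Rmult_le_pos; [apply pow2_ge_0 | nra]).
    nra. }
  assert (eps * D <= eps * S) by (apply Rmult_le_compat_l; lra).
  assert ((eps + 2 * hk) * S <= (eps + 2 * hk) * (T * E)) by (apply Rmult_le_compat_l; lra).
  assert ((eps + 2 * hk) * T * E <= sqrt (2 * T ^ 2 * eps + 8 * hk ^ 2 * T ^ 2) * E)
    by (apply Rmult_le_compat_r; assumption).
  nra.
Qed.

Lemma MT_velocity_spread_bounds N d kappa h a c1 c2 La C x v n :
  (1 <= N)%nat -> 0 < kappa -> 0 < c1 -> (forall r, 0 <= r -> c1 <= a r <= c2) -> 0 < La ->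
  (forall r1 r2, 0 <= r1 -> 0 <= r2 -> Rabs (a r1 - a r2) <= La * Rabs (r1 - r2)) ->
  0 <= C <= 1 -> MT_solution N d kappa h a x v -> 0 <= h -> h * kappa <= 1 ->
  frob N d (DeltaM (x O)) < Mconst N La c1 c2 ->
  frob N d (DeltaM (v O))
    < kappa * RInt (psi N La c1 c2) (frob N d (DeltaM (x O))) (Mconst N La c1 c2) ->
  frob N d (mdiff (DeltaM (v (S n))) (DeltaM (v n))) <= 2 * h * kappa * frob N d (DeltaM (v n)) /\
  frob N d (DeltaM (v n))
    <= exp (- (C * kappa * psi N La c1 c2 (Mconst N La c1 c2) * h) * INR n)
       * frob N d (DeltaM (v O)).
Proof.
  intros HN Hk Hc1 Ha HLa Hl HC Hsol Hh Hhk HX0 HV0.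
  set (M := Mconst N La c1 c2) in *.
  pose proof (c2_nonneg a c1 c2 Hc1 Ha).
  assert (HpsiM : psi N La c1 c2 M = 3 / 4) by (apply psi_Mconst; lra || assumption).
  assert (HE0 : frob N d (DeltaM (v O)) + kappa * psi_antideriv N La c1 c2 (frob N d (DeltaM (x O)))
                < kappa * psi_antideriv N La c1 c2 M) by (rewrite RInt_psi in HV0; lra).
  destruct (spread_invariant N d kappa h a c1 c2 La x v HN Hc1 Ha Hl Hsol Hh ltac:(lra) Hhk M
              ltac:(lra) HX0 HE0 n) as [HXn _].
  split.
  - apply (spread_v_increment_le N d kappa h a c1 c2 La x v); try assumption; try lra.
    eapply Rle_trans; [|apply psi_antitone; [apply phiLip_INR_nonneg; lra | left; exact HXn]].
    lra.
  - eapply Rle_trans; [apply (spread_v_decay N d kappa h a c1 c2 La x v HN Hc1 Ha Hl Hsol Hh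
                              ltac:(lra) Hhk M ltac:(lra) HX0 HE0)|].
    apply Rmult_le_compat_r; [apply frob_nonneg|].
    rewrite HpsiM.
    assert (Hrate : - (kappa * (3 / 4) * h) * INR n <= - (C * kappa * (3 / 4) * h) * INR n).
    { pose proof (pos_INR n).
      assert (0 <= (1 - C) * kappa * h * INR n) by (repeat apply Rmult_le_pos; lra). nra. }
    destruct Hrate as [Hlt|Heq]; [left; now apply exp_increasing | right; now rewrite Heq].
Qed.

Theorem lemma4p6 :
  forall (N d : nat) (kappa : R) (a : R -> R) (c1 c2 La C : R),
    (1 <= N)%nat -> (1 <= d)%nat -> 0 < kappa ->
    0 < c1 -> c1 <= c2 ->
    (forall r, 0 <= r -> c1 <= a r <= c2) ->
    0 < La ->
    (forall r1 r2, 0 <= r1 -> 0 <= r2 -> Rabs (a r1 - a r2) <= La * Rabs (r1 - r2)) ->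
    0 < C < 1 ->
    forall (V0 Vb0 : nat -> vec),
    exists cb0 cb1 cb2 : R, 0 <= cb0 /\ 0 <= cb1 /\ 0 <= cb2 /\
    exists h0 : R, 0 < h0 /\
    forall h : R, 0 < h -> h < h0 -> h < Rmin 1 (1 / kappa) ->
    forall (x v xb vb : nat -> nat -> vec),
      MT_solution N d kappa h a x v ->
      MT_solution N d kappa h a xb vb ->
      (forall i k, (i < N)%nat -> (k < d)%nat -> v O i k = V0 i k /\ vb O i k = Vb0 i k) ->
      Rmax (frob N d (DeltaM (x O))) (frob N d (DeltaM (xb O))) < Mconst N La c1 c2 ->
      frob N d (DeltaM (v O)) <
        kappa * RInt (psi N La c1 c2) (frob N d (DeltaM (x O))) (Mconst N La c1 c2) ->
      frob N d (DeltaM (vb O)) <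
        kappa * RInt (psi N La c1 c2) (frob N d (DeltaM (xb O))) (Mconst N La c1 c2) ->
      forall eps : R, 0 <= eps <= 1 ->
      forall n : nat,
        frob N d (mdiff (DeltaM (v (S n))) (DeltaM (vb (S n)))) <=
          (1 - eps) * frob N d (mdiff (DeltaM (v n)) (DeltaM (vb n)))
          + sqrt (cb0 * eps + cb1 * h + cb2 * h ^ 2)
            * exp (- (C * kappa * psi N La c1 c2 (Mconst N La c1 c2) * h) * INR n).
Proof.
  intros N d kappa a c1 c2 La C HN _ Hk Hc1 _ Ha HLa Hl HC V0 Vb0.
  set (T := frob N d (DeltaM V0) + frob N d (DeltaM Vb0)).
  assert (HT : 0 <= T) by (pose proof (frob_nonneg N d (DeltaM V0));
                           pose proof (frob_nonneg N d (DeltaM Vb0)); unfold T; lra).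
  exists (2 * T ^ 2), 0, (8 * kappa ^ 2 * T ^ 2).
  split; [nra | split; [lra | split; [nra |]]].
  exists 1. split; [lra|].
  intros h Hh _ Hhmin x v xb vb Hsol Hsolb Hinit HX0 HV0 HVb0 eps Heps n.
  assert (Hhk : h * kappa <= 1).
  { assert (Hh' : h <= 1 / kappa) by (pose proof (Rmin_r 1 (1 / kappa)); lra).
    apply (Rmult_le_compat_r kappa) in Hh'; [|lra].
    replace (1 / kappa * kappa) with 1 in Hh' by (field; lra). exact Hh'. }
  destruct (MT_velocity_spread_bounds N d kappa h a c1 c2 La C x v n HN Hk Hc1 Ha HLa Hl
              ltac:(lra) Hsol ltac:(lra) Hhk
              ltac:(eapply Rle_lt_trans; [apply Rmax_l | exact HX0]) HV0)
    as [Hinc Hdecay].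
  destruct (MT_velocity_spread_bounds N d kappa h a c1 c2 La C xb vb n HN Hk Hc1 Ha HLa Hl
              ltac:(lra) Hsolb ltac:(lra) Hhk
              ltac:(eapply Rle_lt_trans; [apply Rmax_r | exact HX0]) HVb0)
    as [Hincb Hdecayb].
  rewrite (frob_DeltaM_ext N d (v O) V0) in Hdecay by (intros; now apply Hinit).
  rewrite (frob_DeltaM_ext N d (vb O) Vb0) in Hdecayb by (intros; now apply Hinit).
  replace (2 * T ^ 2 * eps + 0 * h + 8 * kappa ^ 2 * T ^ 2 * h ^ 2)
    with (2 * T ^ 2 * eps + 8 * (h * kappa) ^ 2 * T ^ 2) by ring.
  apply forced_contraction_le with (S := frob N d (DeltaM (v n)) + frob N d (DeltaM (vb n)));
    [exact Heps | nra | exact HT | left; apply exp_pos | apply frob_mdiff_le | unfold T; lra |].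
  pose proof (frob_mdiff_succ_le N d (DeltaM (v n)) (DeltaM (v (S n)))
                                     (DeltaM (vb n)) (DeltaM (vb (S n)))).
  lra.
Qed.
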